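(* Let $\mathcal E$ be a semilattice with zero, $\mathcal B$ a Boolean algebra, $\pi:\mathcal E\to\mathcal B$ a representation, and $\varphi$ a character of $\mathcal E$. Then there exists a character $\chi$ of $\mathcal B$ preserving meets and joins such that $\varphi=\chi\circ\pi$ if and only if $\varphi$ is $\pi$-tight, i.e. for all $n\ge1$ and $x,y_1,\dots,y_n\in\mathcal E$, $$\pi(x)\le\bigvee_{i=1}^n\pi(y_i)\ \Longrightarrow\ \varphi(x)\le\bigvee_{i=1}^n\varphi(y_i).$$
   Context: Boolean algebras need not have a top element: they have finite meets and joins, a bottom element $0$ and relative complements (generalized Boolean algebras). A representation of a semilattice $\mathcal E$ with zero in $\mathcal B$ is a map $\pi$ with $\pi(0)=0$ and $\pi(xy)=\pi(x)\wedge\pi(y)$. A character of $\mathcal E$ is a map $\varphi:\mathcal E\to\{0,1\}$, not identically zero, with $\varphi(0)=0$ and $\varphi(xy)=\varphi(x)\varphi(y)$. A character of $\mathcal B$ preserving meets and joins is a nonzero map $\chi:\mathcal B\to\{0,1\}$ with $\chi(0)=0$, $\chi(a\wedge b)=\chi(a)\wedge\chi(b)$, $\chi(a\vee b)=\chi(a)\vee\chi(b)$. *)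

(* Semilattice with zero  = bMeetSemilatticeType (meet `&`, zero \bot).
   (Generalized) Boolean algebra, possibly without top
                          = cbDistrLatticeType (bottom, meets, joins,
                            relative complements / difference). *)
From mathcomp Require Import all_boot all_order.
Set Implicit Arguments. Unset Strict Implicit. Unset Printing Implicit Defensive.
Import Order.Theory.
Local Open Scope order_scope.

Definition is_representation d1 (E : bMeetSemilatticeType d1)
    d2 (B : cbDistrLatticeType d2) (pi : E -> B) : Prop :=
  pi \bot = \bot /\ forall x y : E, pi (x `&` y) = pi x `&` pi y.

Definition is_character d1 (E : bMeetSemilatticeType d1) (phi : E -> bool) : Prop :=
  (exists x : E, phi x = true) /\ phi \bot = false /\
  forall x y : E, phi (x `&` y) = phi x && phi y.

Definition is_BA_character d2 (B : cbDistrLatticeType d2) (chi : B -> bool) : Prop :=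
  (exists a : B, chi a = true) /\ chi \bot = false /\
  (forall a b : B, chi (a `&` b) = chi a && chi b) /\
  (forall a b : B, chi (a `|` b) = chi a || chi b).

Definition tight d1 (E : bMeetSemilatticeType d1)
    d2 (B : cbDistrLatticeType d2) (pi : E -> B) (phi : E -> bool) : Prop :=
  forall (n : nat), (0 < n)%N -> forall (x : E) (y : 'I_n -> E),
    pi x <= \join_(i < n) pi (y i) -> phi x <= \join_(i < n) phi (y i).

(** A character of [B] preserving meets and joins is the indicator of a
    nonempty prime filter avoiding [\bot]; it is monotone and commutes with
    finite joins, so [chi \o pi] is tight.  Conversely, tightness of [phi] says
    exactly that the filter generated by [pi] of the support of [phi] misses
    the ideal generated by [pi] of its zero set.  The prime filter theorem of
    distributive lattices (Zorn) enlarges the former to a prime filter still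
    missing the latter, and its indicator [chi] satisfies [phi = chi \o pi]. *)
From mathcomp Require Import all_boot all_order.
From mathcomp Require Import boolp classical_sets.
Set Implicit Arguments. Unset Strict Implicit. Unset Printing Implicit Defensive.
Import Order.Theory.
Local Open Scope classical_set_scope.
Local Open Scope order_scope.

Lemma Zorn_bigcup_above (T : Type) (P : set (set T)) (X0 : set T) :
  P X0 ->
  (forall F : set (set T), F `<=` P -> F !=set0 -> total_on F subset ->
     P (\bigcup_(X in F) X)) ->
  exists2 A, P A /\ X0 `<=` A & forall B, P B -> A `<=` B -> B `<=` A.
Proof.
move=> PX0 Pchain.
pose S := {X : set T | P X /\ X0 `<=` X}.
pose R (s t : S) := `[< sval s `<=` sval t >].
pose s0 : S := exist _ X0 (conj PX0 (@subset_refl _ X0)).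
have [| | |[A [PA X0A]] maxA] := @ZL_preorder S s0 R.
- by move=> s; apply/asboolP.
- by move=> r s t /asboolP rs /asboolP st; apply/asboolP; exact: subset_trans st.
- move=> C Ctot; have [[c0 Cc0]|C0] := pselect (exists s, C s); last first.
    by exists s0 => s Cs; exfalso; apply: C0; exists s.
  pose F := [set sval s | s in C].
  have PF : P (\bigcup_(X in F) X).
    apply: Pchain; first by move=> _ [s _ <-]; exact: (svalP s).1.
      by exists (sval c0), c0.
    move=> _ _ [s Cs <-] [t Ct <-].
    by have [/asboolP|/asboolP] := Ctot s t Cs Ct; [left|right].
  have X0F : X0 `<=` \bigcup_(X in F) X.
    by move=> x X0x; exists (sval c0); [exists c0|exact: (svalP c0).2].
  exists (exist _ (\bigcup_(X in F) X) (conj PF X0F)) => s Cs.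
  by apply/asboolP => x sx; exists (sval s) => //; exists s.
- exists A => // B PB AB.
  by have /asboolP := maxA (exist _ B (conj PB (subset_trans X0A AB))) (asboolT AB).
Qed.

Section PrimeFilter.
Context {d : Order.disp_t} {L : distrLatticeType d}.
Implicit Types (a b c : L) (P Q I : set L).

Record is_filter P : Prop := {
  filterS : forall {a b}, a <= b -> P a -> P b;
  filterI : forall {a b}, P a -> P b -> P (a `&` b) }.

Record is_ideal I : Prop := {
  idealS : forall {a b}, a <= b -> I b -> I a;
  idealU : forall {a b}, I a -> I b -> I (a `|` b) }.

Definition is_prime_filter P : Prop :=
  is_filter P /\ forall a b, P (a `|` b) -> P a \/ P b.

Lemma is_filter_bigcup (F : set (set L)) :
  F `<=` is_filter -> total_on F subset -> is_filter (\bigcup_(P in F) P).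
Proof.
move=> Ffilt Ftot; split.
  by move=> a b ab [P FP Pa]; exists P => //; exact: (filterS (Ffilt P FP) ab Pa).
move=> a b [P FP Pa] [Q FQ Qb].
have [PQ|QP] := Ftot P Q FP FQ.
- by exists Q => //; exact: (filterI (Ffilt Q FQ) (PQ _ Pa) Qb).
- by exists P => //; exact: (filterI (Ffilt P FP) Pa (QP _ Qb)).
Qed.

Definition filter_adjoin P a : set L := [set c | exists2 m, P m & m `&` a <= c].

Lemma is_filter_adjoin P a : is_filter P -> is_filter (filter_adjoin P a).
Proof.
move=> Pfilt; split.
  by move=> b c bc [m Pm mab]; exists m => //; exact: le_trans bc.
move=> b c [m Pm mab] [n Pn nac]; exists (m `&` n); first exact: filterI.
by rewrite lexI (le_trans _ mab) ?(le_trans _ nac) // leI2 ?leIl ?leIr.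
Qed.

Lemma sub_filter_adjoin P a : P `<=` filter_adjoin P a.
Proof. by move=> c Pc; exists c => //; exact: leIl. Qed.

Lemma filter_adjoin_self P a : P !=set0 -> filter_adjoin P a a.
Proof. by move=> [m Pm]; exists m => //; exact: leIr. Qed.

Section MaximalFilter.
Variables (I A : set L).
Hypotheses (Iideal : is_ideal I) (Afilt : is_filter A) (AI : forall c, A c -> ~ I c).
Hypothesis Amax : forall Q, is_filter Q -> (forall c, Q c -> ~ I c) ->
  A `<=` Q -> Q `<=` A.

Lemma maximal_filter_adjoin a : A !=set0 -> ~ A a -> exists2 m, A m & I (m `&` a).
Proof.
move=> A0 Aa; apply: contrapT => noI; apply: Aa.
apply: (Amax (is_filter_adjoin a Afilt) _ (@sub_filter_adjoin A a)).
- move=> c [m Am mac] Ic; apply: noI; exists m => //.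
  exact: (idealS Iideal mac Ic).
- exact: filter_adjoin_self.
Qed.

Lemma maximal_filter_prime : is_prime_filter A.
Proof.
split=> // a b Aab; apply: contrapT => /not_orP[Aa Ab].
have [m Am Ima] := maximal_filter_adjoin (ex_intro _ _ Aab) Aa.
have [n An Inb] := maximal_filter_adjoin (ex_intro _ _ Aab) Ab.
have Amn : A ((m `&` n) `&` (a `|` b)) := filterI Afilt (filterI Afilt Am An) Aab.
apply: (AI Amn); apply: (idealS Iideal _ (idealU Iideal Ima Inb)).
by rewrite meetUr leU2 // leI2 ?leIl ?leIr.
Qed.

End MaximalFilter.

Theorem prime_filter_theorem F I :
  is_filter F -> is_ideal I -> (forall c, F c -> ~ I c) ->
  exists2 P, is_prime_filter P /\ F `<=` P & forall c, P c -> ~ I c.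
Proof.
move=> Ffilt Iideal FI.
pose good Q := is_filter Q /\ forall c, Q c -> ~ I c.
have [A [[Afilt AI] FA] Amax] : exists2 A, good A /\ F `<=` A &
    forall Q, good Q -> A `<=` Q -> Q `<=` A.
  apply: Zorn_bigcup_above; first by split.
  move=> C Cgood _ Ctot; split.
    by apply: is_filter_bigcup Ctot => Q /Cgood[].
  by move=> c [Q /Cgood[_ QI] Qc]; exact: QI.
exists A => //; split => //.
apply: maximal_filter_prime Iideal Afilt AI _.
by move=> Q Qfilt QI; exact: Amax.
Qed.

End PrimeFilter.

Section BooleanCharacter.
Context {d : Order.disp_t} {B : cbDistrLatticeType d}.
Variable chi : B -> bool.
Hypothesis chiB : is_BA_character chi.

Lemma BA_character_homo : {homo chi : a b / a <= b}.
Proof.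
have [_ [_ [chiI _]]] := chiB.
by move=> a b /meet_idPl ab; rewrite -ab chiI; case: (chi a); case: (chi b).
Qed.

Lemma BA_character_join (I : Type) (r : seq I) (P : pred I) (F : I -> B) :
  chi (\join_(i <- r | P i) F i) = \join_(i <- r | P i) chi (F i).
Proof. by have [_ [chi0 [_ chiU]]] := chiB; rewrite (big_morph chi chiU chi0). Qed.

End BooleanCharacter.

Lemma prime_filter_BA_character d (B : cbDistrLatticeType d) (P : set B) :
  is_prime_filter P -> P !=set0 -> ~ P \bot -> is_BA_character (fun b => `[< P b >]).
Proof.
move=> [Pfilt Pprime] [a Pa] Pbot; split; [|split; [|split]].
- by exists a; apply/asboolP.
- by apply/asboolP.
- move=> b c; apply/asboolP/andP => [Pbc|[/asboolP Pb /asboolP Pc]].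
    by split; apply/asboolP; apply: (filterS Pfilt _ Pbc); rewrite ?leIl ?leIr.
  exact: (filterI Pfilt Pb Pc).
- move=> b c; apply/asboolP/orP => [/Pprime[Pb|Pc]|[/asboolP Pb|/asboolP Pc]].
  + by left; apply/asboolP.
  + by right; apply/asboolP.
  + by apply: (filterS Pfilt _ Pb); rewrite leUl.
  + by apply: (filterS Pfilt _ Pc); rewrite leUr.
Qed.

Lemma BA_character_tight d1 (E : bMeetSemilatticeType d1)
    d2 (B : cbDistrLatticeType d2) (pi : E -> B) (chi : B -> bool) :
  is_BA_character chi -> tight pi (chi \o pi).
Proof.
move=> chiB n _ x y /(BA_character_homo chiB).
by rewrite BA_character_join.
Qed.

Section TightCharacter.
Context {d1 : Order.disp_t} {E : bMeetSemilatticeType d1}.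
Context {d2 : Order.disp_t} {B : cbDistrLatticeType d2}.
Variables (pi : E -> B) (phi : E -> bool).
Hypotheses (piR : is_representation pi) (phiC : is_character phi).

Definition support_filter : set B := [set c | exists2 x, phi x & pi x <= c].

Definition kernel_ideal : set B :=
  [set c | exists2 s : seq E, all (fun y => ~~ phi y) s & c <= \join_(y <- s) pi y].

Lemma is_filter_support : is_filter support_filter.
Proof.
have [_ piI] := piR; have [_ [_ phiI]] := phiC; split.
  by move=> a b ab [x phix xa]; exists x => //; exact: le_trans ab.
move=> a b [x phix xa] [y phiy yb]; exists (x `&` y); first by rewrite phiI phix.
by rewrite piI leI2.
Qed.

Lemma is_ideal_kernel : is_ideal kernel_ideal.
Proof.
split.
  by move=> a b ab [s s0 bs]; exists s => //; exact: le_trans bs.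
move=> a b [s s0 a_s] [t t0 b_t]; exists (s ++ t); first by rewrite all_cat s0.
by rewrite big_cat leU2.
Qed.

(* Tightness only quantifies over nonempty families; padding with [\bot]
   removes that restriction. *)
Lemma tight_seq : tight pi phi -> forall (x : E) (s : seq E),
  pi x <= \join_(y <- s) pi y -> phi x <= \join_(y <- s) phi y.
Proof.
have [pi0 _] := piR; have [_ [phi0 _]] := phiC.
move=> phiT x s.
have join_nth d (T : bLatticeType d) (f : E -> T) (r : seq E) :
    \join_(i < size r) f (nth \bot r i) = \join_(y <- r) f y.
  by rewrite (big_nth \bot) big_mkord.
have := phiT (size (\bot :: s)) isT x (nth \bot (\bot :: s)).
by rewrite !join_nth !big_cons pi0 phi0 join0x.
Qed.

Lemma support_kernel_disjoint :
  tight pi phi -> forall c, support_filter c -> ~ kernel_ideal c.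
Proof.
move=> phiT c [x phix xc] [s s0 cs].
have := tight_seq phiT (le_trans xc cs); rewrite phix big1_seq //.
by move=> y /andP[_ /(allP s0)/negbTE ->].
Qed.

Lemma tight_extends : tight pi phi ->
  exists chi : B -> bool, is_BA_character chi /\ phi = chi \o pi.
Proof.
move=> phiT; have [[x0 phix0] _] := phiC.
have [P [Pprime SP] PK] := prime_filter_theorem is_filter_support is_ideal_kernel
  (support_kernel_disjoint phiT).
have SPpi y : phi y -> P (pi y) by move=> phiy; apply: SP; exists y.
exists (fun b => `[< P b >]); split.
  apply: prime_filter_BA_character => //; first by exists (pi x0); exact: SPpi.
  by move=> Pbot; apply: (PK _ Pbot); exists [::].
apply: funext => y /=; case: (boolP (phi y)) => [/SPpi Py|phiy].
  by symmetry; apply/asboolP.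
apply/esym/asboolP => Py; apply: (PK _ Py); exists [:: y]; first by rewrite /= phiy.
by rewrite big_seq1.
Qed.

End TightCharacter.

Theorem theorem15p11 (d1 : Order.disp_t) (E : bMeetSemilatticeType d1)
    (d2 : Order.disp_t) (B : cbDistrLatticeType d2) (pi : E -> B) (phi : E -> bool) :
  is_representation pi -> is_character phi ->
  (exists chi : B -> bool, is_BA_character chi /\ phi = chi \o pi)
  <-> tight pi phi.
Proof.
move=> piR phiC; split; last exact: tight_extends.
by move=> [chi [chiB ->]]; exact: BA_character_tight.
Qed.
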